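(* Let $E$ be a Fréchet space with increasing fundamental system of seminorms $(p_{\alpha_n})_{n\in\mathbb{N}}$, and let $B_n:=B_{\alpha_n}^\circ$ where $B_{\alpha_n}:=\{x\in E:p_{\alpha_n}(x)<1\}$, $n\in\mathbb{N}$. Let $(T^{E}_{m},T^{\mathbb{K}}_{m})_{m\in\mathcal{M}}$ be a strong, consistent family for $(\mathcal{FV},E)$, let $\mathcal{FV}(\Omega)$ be a semi-Montel space and $U$ a set of uniqueness for $\mathcal{FV}(\Omega)$. Then the restriction map \[ R_{U,E'}\colon S(\mathcal{FV}(\Omega)\varepsilon E)\to\mathcal{FV}_{E'}(U,E)_{sb},\quad f\mapsto (T^E_m(f)(x))_{(m,x)\in U}, \] is surjective.
   Context: $\mathbb{K}\in\{\mathbb{R},\mathbb{C}\}$; $E'$ is the dual of $E$ and $B^\circ$ denotes the polar in $E'$. Semi-Montel: bounded sets are relatively compact. Weighted function spaces: Let $\Omega,J,L$ be non-empty sets, $(M_l)_{l\in L}$ non-empty sets and $\mathcal{V}=((\nu_{j,l,m})_{m\in M_l})_{j\in J,l\in L}$ functions $\nu_{j,l,m}\colon\Omega\to[0,\infty)$ such that for all $x\in\Omega$, $l\in L$ there is $j$ with $\nu_{j,l,m}(x)>0$ for all $m\in M_l$. Let $\mathcal{M}_{\mathrm{top}}:=\bigcup_lM_l$, and $\mathcal{M}_0,\mathcal{M}_r$ sets, the three pairwise disjoint, $\mathcal{M}$ their union; $(\omega_m)_{m\in\mathcal{M}}$ non-empty sets with $\Omega\subset\omega_m$ for $m\in\mathcal{M}_{\mathrm{top}}$.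 For $F\in\{E,\mathbb{K}\}$ (with seminorms $(p_{\alpha_n})$ on $E$, $|\cdot|$ on $\mathbb{K}$) let $T^F_m\colon\operatorname{dom}T^F_m\subset F^\Omega\to F^{\omega_m}$ be linear. $\mathcal{FV}(\Omega,F)$ is the set of $f\in\bigcap_{m\in\mathcal{M}}\operatorname{dom}T^F_m\cap\bigcap_{m\in\mathcal{M}_0}\ker T^F_m$ with $|f|_{j,l,\alpha}:=\sup_{x\in\Omega,m\in M_l}p_\alpha(T^F_m(f)(x))\nu_{j,l,m}(x)<\infty$ for all $j,l,\alpha$, with these seminorms; $\mathcal{FV}(\Omega):=\mathcal{FV}(\Omega,\mathbb{K})$; $T^F_{m,x}(f):=T^F_m(f)(x)$. A dom-space: seminorms directed and, in the scalar case, point evaluations $\delta_x$ continuous. $\mathcal{FV}(\Omega)\varepsilon E$: continuous linear maps $\mathcal{FV}(\Omega)'_\kappa\to E$ ($\kappa$: uniform convergence on absolutely convex compact sets), $S(u)(x):=u(\delta_x)$. With $\mathcal{FV}(\Omega)$, $\mathcal{FV}(\Omega,E)$ dom-spaces built from the same data with operators $T^{\mathbb{K}}_m$, $T^E_m$, the family is consistent if for all $u$, $m$, $x\in\omega_m$: $S(u)\in\operatorname{dom}T^E_m$, $T^{\mathbb{K}}_{m,x}|_{\mathcal{FV}(\Omega)}\in\mathcal{FV}(\Omega)'$ and $T^E_m(S(u))(x)=u(T^{\mathbb{K}}_{m,x})$; strong if for all $e'\in E'$, $f\in\mathcal{FV}(\Omega,E)$, $m$: $e'\circ f\in\operatorname{dom}T^{\mathbb{K}}_m$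 and $T^{\mathbb{K}}_m(e'\circ f)=e'\circ T^E_m(f)$ on $\omega_m$. $U\subset\bigcup_m\{m\}\times\omega_m$ is a set of uniqueness for $\mathcal{FV}(\Omega)$ if $T^{\mathbb{K}}_{m,x}\in\mathcal{FV}(\Omega)'$ for $(m,x)\in U$ and $f\in\mathcal{FV}(\Omega)$ with $T^{\mathbb{K}}_m(f)(x)=0$ for all $(m,x)\in U$ is $0$. $\mathcal{FV}_{E'}(U,E)$ is the set of $f\colon U\to E$ such that for each $e'\in E'$ there is a (unique) $f_{e'}\in\mathcal{FV}(\Omega)$ with $T^{\mathbb{K}}_m(f_{e'})(x)=e'(f(m,x))$ for all $(m,x)\in U$; $\mathcal{FV}_{E'}(U,E)_{sb}$ is the set of such $f$ for which $\{f_{e'}:e'\in B_n\}$ is bounded in $\mathcal{FV}(\Omega)$ for every $n\in\mathbb{N}$. *)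

From Stdlib Require List.
From HB Require Import structures.
From mathcomp Require Import all_boot all_order all_algebra reals complex.
Set Implicit Arguments. Unset Strict Implicit. Unset Printing Implicit Defensive.
Import Order.TTheory GRing.Theory Num.Theory.
Local Open Scope ring_scope.

Definition RC (R : realType) (b : bool) : numFieldType :=
  if b then (R : numFieldType) else (R[i] : numFieldType).

(* Data of a weighted function space:
   Omega (embedded by the injective map emb into an ambient type X, in which
   the sets omega_m live), index sets J, L, the index type Mset (the union
   M = M_top u M_0 u M_r), the sets M_l, the sets omega_m and weights nu. *)
Record wdata (K : numFieldType) := WData {
  Omega : Type;
  X : Type;
  emb : Omega -> X;
  J : Type;
  L : Type;
  Mset : Type;
  Mtop : Mset -> Prop;
  M0 : Mset -> Prop;
  Mr : Mset -> Prop;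
  Ml : L -> Mset -> Prop;
  omega : Mset -> X -> Prop;
  nu : J -> L -> Mset -> Omega -> K }.

Arguments Omega {K} w.  Arguments X {K} w.  Arguments emb {K} w _.
Arguments J {K} w.  Arguments L {K} w.  Arguments Mset {K} w.
Arguments Mtop {K} w _.  Arguments M0 {K} w _.  Arguments Mr {K} w _.
Arguments Ml {K} w _ _.  Arguments omega {K} w _ _.  Arguments nu {K} w _ _ _ _.

Section Defs.
Variables (K : numFieldType) (W : wdata K).

Definition wdata_ok : Prop :=
  [/\ inhabited (Omega W), inhabited (J W), inhabited (L W),
   (forall l, exists m, Ml W l m) & [/\
   (forall m, Mtop W m <-> exists l, Ml W l m),
   (forall m, ~ (Mtop W m /\ M0 W m) /\ ~ (Mtop W m /\ Mr W m) /\ ~ (M0 W m /\ Mr W m)),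
   (forall m, Mtop W m \/ M0 W m \/ Mr W m),
   (forall m, exists y, omega W m y) &
   [/\ (forall m, Mtop W m -> forall x, omega W m (emb W x)),
       (forall x1 x2, emb W x1 = emb W x2 -> x1 = x2),
       (forall j l m x, 0 <= nu W j l m x) &
       (forall x l, exists j, forall m, Ml W l m -> 0 < nu W j l m x)]]].

Definition fadd (F : lmodType K) (f g : Omega W -> F) : Omega W -> F :=
  fun x => f x + g x.
Definition fscale (F : lmodType K) (a : K) (f : Omega W -> F) : Omega W -> F :=
  fun x => a *: f x.
Definition fzero (F : lmodType K) : Omega W -> F := fun _ => 0.

(* a family of linear operators T_m : dom T_m (subspace of F^Omega) -> F^{omega_m} *)
Definition lin_ops (F : lmodType K) (dom : Mset W -> (Omega W -> F) -> Prop)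
  (T : Mset W -> (Omega W -> F) -> X W -> F) : Prop :=
  forall m, dom m (fzero F) /\
   forall a f g, dom m f -> dom m g ->
     dom m (fadd (fscale a f) g) /\
     forall y, omega W m y -> T m (fadd (fscale a f) g) y = a *: T m f y + T m g y.

(* b bounds the seminorm |f|_{j,l,alpha} (i.e. |f|_{j,l,alpha} <= b) *)
Definition bnd (F : lmodType K) (A : Type) (q : A -> F -> K)
  (T : Mset W -> (Omega W -> F) -> X W -> F) (j : J W) (l : L W) (a : A)
  (f : Omega W -> F) (b : K) : Prop :=
  forall x m, Ml W l m -> q a (T m f (emb W x)) * nu W j l m x <= b.

Definition inFV (F : lmodType K) (A : Type) (q : A -> F -> K)
  (dom : Mset W -> (Omega W -> F) -> Prop)
  (T : Mset W -> (Omega W -> F) -> X W -> F) (f : Omega W -> F) : Prop :=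
  [/\ (forall m, dom m f),
      (forall m, M0 W m -> forall y, omega W m y -> T m f y = 0) &
      (forall j l a, exists b, bnd q T j l a f b)].

(* directedness of the seminorms (first half of "dom-space") *)
Definition directed (F : lmodType K) (A : Type) (q : A -> F -> K)
  (dom : Mset W -> (Omega W -> F) -> Prop)
  (T : Mset W -> (Omega W -> F) -> X W -> F) : Prop :=
  forall (j1 j2 : J W) (l1 l2 : L W) (a1 a2 : A), exists j3 l3 a3 (C : K),
    0 < C /\ forall f, inFV q dom T f -> forall b, bnd q T j3 l3 a3 f b ->
      bnd q T j1 l1 a1 f (C * b) /\ bnd q T j2 l2 a2 f (C * b).

Definition qK : unit -> K^o -> K := fun _ (k : K) => `|k|.

Section Scalar.
Variables (domK : Mset W -> (Omega W -> K^o) -> Prop)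
          (TK : Mset W -> (Omega W -> K^o) -> X W -> K^o).

Definition FVK (f : Omega W -> K^o) : Prop := inFV qK domK TK f.
Definition bndK (i : J W * L W) (f : Omega W -> K^o) (b : K) : Prop :=
  bnd qK TK i.1 i.2 tt f b.

Definition sball (s : seq (J W * L W)) (f : Omega W -> K^o) (eps : K)
  (g : Omega W -> K^o) : Prop :=
  FVK g /\ forall i, List.In i s ->
    exists d, d < eps /\ bndK i (fadd g (fscale (-1) f)) d.

Definition openFV (V : (Omega W -> K^o) -> Prop) : Prop :=
  forall f, FVK f -> V f ->
    exists s eps, 0 < eps /\ forall g, sball s f eps g -> V g.

Definition compactFV (C : (Omega W -> K^o) -> Prop) : Prop :=
  (forall f, C f -> FVK f) /\
  forall (I : Type) (V : I -> (Omega W -> K^o) -> Prop),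
    (forall i, openFV (V i)) -> (forall f, C f -> exists i, V i f) ->
    exists s : seq I, forall f, C f -> exists i, List.In i s /\ V i f.

Definition closureFV (A : (Omega W -> K^o) -> Prop) (f : Omega W -> K^o) : Prop :=
  FVK f /\ forall s eps, 0 < eps -> exists g, A g /\ sball s f eps g.

Definition boundedFV (A : (Omega W -> K^o) -> Prop) : Prop :=
  (forall f, A f -> FVK f) /\ forall i, exists b, forall f, A f -> bndK i f b.

Definition semi_Montel : Prop :=
  forall A, boundedFV A -> compactFV (closureFV A).

Definition abs_convex (C : (Omega W -> K^o) -> Prop) : Prop :=
  forall f g (a c : K), C f -> C g -> `|a| + `|c| <= 1 ->
    C (fadd (fscale a f) (fscale c g)).

(* the dual FV(Omega)' (functionals are represented by functions on K^Omega,
   only their values on FV(Omega) matter) *)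
Definition dualFV (y : (Omega W -> K^o) -> K) : Prop :=
  (forall a f g, FVK f -> FVK g -> y (fadd (fscale a f) g) = a * y f + y g) /\
  exists (s : seq (J W * L W)) (C : K), forall f, FVK f ->
    forall b, (forall i, List.In i s -> bndK i f b) -> `|y f| <= C * b.

Definition delta (x : Omega W) : (Omega W -> K^o) -> K := fun f => f x.
Definition TKx (m : Mset W) (y : X W) : (Omega W -> K^o) -> K := fun f => TK m f y.

Definition set_of_uniqueness (U : Mset W -> X W -> Prop) : Prop :=
  (forall m y, U m y -> omega W m y) /\
  (forall m y, U m y -> dualFV (TKx m y)) /\
  (forall f, FVK f -> (forall m y, U m y -> TK m f y = 0) -> forall x, f x = 0).

Section EValued.
Variables (E : lmodType K) (p : nat -> E -> K).

Definition frechet : Prop :=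
  [/\ (forall n x, 0 <= p n x),
      (forall n x y, p n (x + y) <= p n x + p n y),
      (forall n (a : K) x, p n (a *: x) = `|a| * p n x),
      (forall n x, p n x <= p n.+1 x) &
      ((forall x, (forall n, p n x = 0) -> x = 0) /\
      (forall u : nat -> E,
         (forall n eps, 0 < eps -> exists N, forall i k, (N <= i)%N -> (N <= k)%N ->
            p n (u i - u k) < eps) ->
         exists x, forall n eps, 0 < eps -> exists N, forall i, (N <= i)%N ->
            p n (u i - x) < eps))].

Definition dualE (e' : E -> K) : Prop :=
  (forall a x y, e' (a *: x + y) = a * e' x + e' y) /\
  exists n (C : K), forall x, `|e' x| <= C * p n x.

Definition polarB (n : nat) (e' : E -> K) : Prop :=
  dualE e' /\ forall x, p n x < 1 -> `|e' x| <= 1.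

(* FV(Omega) eps E: continuous linear maps FV(Omega)'_kappa -> E *)
Definition epsFV (u : ((Omega W -> K^o) -> K) -> E) : Prop :=
  (forall (a : K) y1 y2, dualFV y1 -> dualFV y2 ->
     u (fun f => a * y1 f + y2 f) = a *: u y1 + u y2) /\
  forall n, exists (Ks : seq ((Omega W -> K^o) -> Prop)) (C : K),
    (forall Kc, List.In Kc Ks -> abs_convex Kc /\ compactFV Kc) /\
    forall y, dualFV y -> forall b,
      (forall Kc, List.In Kc Ks -> forall f, Kc f -> `|y f| <= b) ->
      p n (u y) <= C * b.

Definition Sop (u : ((Omega W -> K^o) -> K) -> E) : Omega W -> E :=
  fun x => u (delta x).

Variables (domE : Mset W -> (Omega W -> E) -> Prop)
          (TE : Mset W -> (Omega W -> E) -> X W -> E).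

Definition FVE (f : Omega W -> E) : Prop := inFV p domE TE f.

Definition dom_spaces : Prop :=
  [/\ directed qK domK TK, directed p domE TE & forall x, dualFV (delta x)].

Definition consistent : Prop :=
  forall u, epsFV u -> forall m y, omega W m y ->
    [/\ domE m (Sop u), dualFV (TKx m y) & TE m (Sop u) y = u (TKx m y)].

Definition strong : Prop :=
  forall e', dualE e' -> forall f, FVE f -> forall m,
    domK m (fun x => e' (f x)) /\
    forall y, omega W m y -> TK m (fun x => e' (f x)) y = e' (TE m f y).

Definition FVE'U (U : Mset W -> X W -> Prop) (f : Mset W -> X W -> E) : Prop :=
  forall e', dualE e' -> exists g, FVK g /\ forall m y, U m y -> TK m g y = e' (f m y).

Definition FVE'U_sb (U : Mset W -> X W -> Prop) (f : Mset W -> X W -> E) : Prop :=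
  FVE'U U f /\
  forall n, boundedFV (fun g => exists e', polarB n e' /\
     FVK g /\ forall m y, U m y -> TK m g y = e' (f m y)).

End EValued.
End Scalar.
End Defs.

(* For e' in E' let f_e' in FV(Omega) be the function with T^K_m f_e' (x) = e' (f (m, x))
   on U.  By hypothesis the sets {f_e' : e' in B_n} are bounded, so their closures K_n are
   absolutely convex and compact.  Given y in FV(Omega)', compactness of K_n and uniqueness
   of U yield finitely many points of U on whose common kernel |y| < eps on K_n; a
   Hahn-Banach extension from that kernel shows that y is eps-close on K_n to a finite
   combination of the functionals T^K_{m,x}.  Replacing each T^K_{m,x} by f (m, x) gives a
   Cauchy sequence in E whose limit u y satisfies e' (u y) = y f_e' for all e' in E'.  The
   bound |y| on K_n controls p_n (u y), so u is continuous on FV(Omega)'_kappa, and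
   consistency gives T^E_m (S u) x = u T^K_{m,x} = f (m, x) since E' separates points. *)

From HB Require Import structures.
From mathcomp Require Import all_boot all_order all_algebra reals complex.
From mathcomp Require Import unstable boolp classical_sets functions.
From mathcomp Require Import ring lra.
Set Implicit Arguments. Unset Strict Implicit. Unset Printing Implicit Defensive.
Import Order.TTheory GRing.Theory Num.Theory.
Local Open Scope ring_scope.

Definition is_subspace {K : pzRingType} {V : lmodType K} (P : V -> Prop) :=
  P 0 /\ (forall a x y, P x -> P y -> P (a *: x + y)).

Definition linear_on {K : pzRingType} {V : lmodType K} (P : V -> Prop) (f : V -> K) :=
  forall a x y, P x -> P y -> f (a *: x + y) = a * f x + f y.

Section Subspaces.
Variables (K : pzRingType) (V : lmodType K) (P : V -> Prop) (f : V -> K).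
Hypothesis sP : is_subspace P.

Lemma subspace0 : P 0. Proof. by case: sP. Qed.

Lemma subspaceD x y : P x -> P y -> P (x + y).
Proof. by move=> Px Py; have := sP.2 1 x y Px Py; rewrite scale1r. Qed.

Lemma subspaceZ a x : P x -> P (a *: x).
Proof. by move=> Px; have := sP.2 a x 0 Px subspace0; rewrite addr0. Qed.

Lemma subspaceB x y : P x -> P y -> P (x - y).
Proof. by move=> Px Py; rewrite -scaleN1r addrC; apply: sP.2. Qed.

Hypothesis fP : linear_on P f.

Lemma linear_on0 : f 0 = 0.
Proof.
have := fP 1 subspace0 subspace0; rewrite scaler0 addr0 mul1r => h.
by apply: (addIr (f 0)); rewrite add0r -h.
Qed.

Lemma linear_onD x y : P x -> P y -> f (x + y) = f x + f y.
Proof. by move=> Px Py; have := fP 1 Px Py; rewrite scale1r mul1r. Qed.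

Lemma linear_onZ a x : P x -> f (a *: x) = a * f x.
Proof. by move=> Px; have := fP a Px subspace0; rewrite addr0 linear_on0 addr0. Qed.

Lemma linear_onN x : P x -> f (- x) = - f x.
Proof. by move=> Px; rewrite -scaleN1r linear_onZ // mulN1r. Qed.

Lemma linear_onB x y : P x -> P y -> f (x - y) = f x - f y.
Proof. by move=> Px Py; rewrite -scaleN1r addrC fP // mulN1r addrC. Qed.

End Subspaces.

Section HahnBanachSublinear.
Local Open Scope classical_set_scope.
Variables (R : realType) (V : lmodType R) (P M : V -> Prop) (q l : V -> R).
Hypotheses (sP : is_subspace P) (sM : is_subspace M) (MP : forall x, M x -> P x)
  (qD : forall x y, P x -> P y -> q (x + y) <= q x + q y)
  (qZ : forall (t : R) x, 0 < t -> P x -> q (t *: x) = t * q x)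
  (lM : linear_on M l) (lq : forall x, M x -> l x <= q x).

Record dominated_extension (D : V -> Prop) (g : V -> R) : Prop := {
  ext_subspace : is_subspace D;
  ext_sub : forall x, M x -> D x;
  ext_sup : forall x, D x -> P x;
  ext_linear : linear_on D g;
  ext_eq : forall x, M x -> g x = l x;
  ext_le : forall x, D x -> g x <= q x }.

Lemma dominated_extension_id : dominated_extension M l.
Proof. by split=> // x Mx; apply: MP. Qed.

Section AdjoinVector.
Variables (D : V -> Prop) (g : V -> R) (x0 : V).
Hypotheses (hDg : dominated_extension D g) (Px0 : P x0) (nDx0 : ~ D x0).
Let sD := ext_subspace hDg.
Let gD := ext_linear hDg.

Lemma adjoin_gap d1 d2 : D d1 -> D d2 ->
  g d1 - q (d1 - x0) <= q (d2 + x0) - g d2.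
Proof.
move=> D1 D2; have Pd1 := ext_sup hDg D1; have Pd2 := ext_sup hDg D2.
have h1 : g (d1 + d2) = g d1 + g d2 by rewrite (linear_onD gD).
have h2 : g (d1 + d2) <= q (d1 + d2) by apply: (ext_le hDg); apply: subspaceD.
have h3 : q (d1 + d2) <= q (d1 - x0) + q (d2 + x0).
  have -> : d1 + d2 = (d1 - x0) + (d2 + x0) by rewrite addrACA addNr addr0.
  by apply: qD; [apply: subspaceB | apply: subspaceD].
lra.
Qed.

(* Any [c] between the two sides of [adjoin_gap] is an admissible value at [x0]. *)
Let c := sup [set r | exists d, D d /\ r = g d - q (d - x0)].

Lemma adjoin_gap_le_sup d : D d -> g d - q (d - x0) <= c.
Proof.
move=> Dd; apply: ub_le_sup; last by exists d.
exists (q (0 + x0) - g 0) => r [d1 [Dd1 ->]].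
by apply: adjoin_gap => //; apply: subspace0 sD.
Qed.

Lemma sup_le_adjoin_gap d : D d -> c <= q (d + x0) - g d.
Proof.
move=> Dd; apply: ge_sup.
  by exists (g 0 - q (0 - x0)), 0; split=> //; apply: subspace0 sD.
by move=> r [d1 [Dd1 ->]]; apply: adjoin_gap.
Qed.

Lemma adjoin_decomp_uniq d1 t1 d2 t2 : D d1 -> D d2 ->
  d1 + t1 *: x0 = d2 + t2 *: x0 -> d1 = d2 /\ t1 = t2.
Proof.
move=> D1 D2 e; have [/eqP|nt] := eqVneq (t1 - t2) 0.
  rewrite subr_eq0 => /eqP t12; subst t2; split=> //.
  by move: e => /eqP; rewrite (inj_eq (addIr _)) => /eqP.
exfalso; apply: nDx0.
have : (t1 - t2) *: x0 = d2 - d1.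
  have -> : d2 = d1 + (t1 - t2) *: x0 by rewrite scalerBl addrA e addrK.
  by rewrite [d1 + _]addrC addrK.
move=> /(congr1 (fun v => (t1 - t2)^-1 *: v)); rewrite scalerA mulVf // scale1r => ->.
by apply: (subspaceZ sD); apply: (subspaceB sD).
Qed.

Definition adjoin v := exists d t, D d /\ v = d + t *: x0.

Definition adjoin_fun v :=
  if pselect (exists dt : V * R, D dt.1 /\ v = dt.1 + dt.2 *: x0) is left H
  then let dt := projT1 (cid H) in g dt.1 + dt.2 * c else 0.

Lemma adjoin_funE d t : D d -> adjoin_fun (d + t *: x0) = g d + t * c.
Proof.
move=> Dd; rewrite /adjoin_fun; case: pselect => [H|[]]; last by exists (d, t).
case: (cid H) => [[d1 t1] [/= D1 e]] /=.
by have [-> ->] := adjoin_decomp_uniq D1 Dd (esym e).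
Qed.

Lemma adjoin_fun_id d : D d -> adjoin_fun d = g d.
Proof. by move=> Dd; have := adjoin_funE 0 Dd; rewrite scale0r addr0 mul0r addr0. Qed.

(* Scale by [|t|] and use the bound on [c] from the matching side. *)
Lemma adjoin_fun_le d t : D d -> g d + t * c <= q (d + t *: x0).
Proof.
move=> Dd; have Pd := ext_sup hDg Dd.
have [->|tn0] := eqVneq t 0.
  by rewrite scale0r addr0 mul0r addr0; apply: (ext_le hDg).
have [tpos|tneg] := ltrP 0 t.
  have Dd' : D (t^-1 *: d) by apply: (subspaceZ sD).
  have Pd' : P (t^-1 *: d + x0) by apply: (subspaceD sP) => //; apply: (subspaceZ sP).
  have := sup_le_adjoin_gap Dd'; rewrite (linear_onZ sD gD) //.
  have -> : d + t *: x0 = t *: (t^-1 *: d + x0).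
    by rewrite scalerDr scalerA divff ?scale1r // gt_eqF.
  rewrite qZ // -(ler_pM2l tpos) mulrBr mulrA divff ?mul1r ?gt_eqF //; lra.
have s0 : 0 < - t by rewrite oppr_gt0 lt_neqAle tn0.
have Dd' : D ((- t)^-1 *: d) by apply: (subspaceZ sD).
have Pd' : P ((- t)^-1 *: d - x0) by apply: (subspaceB sP) => //; apply: (subspaceZ sP).
have := adjoin_gap_le_sup Dd'; rewrite (linear_onZ sD gD) //.
have -> : d + t *: x0 = - t *: ((- t)^-1 *: d - x0).
  by rewrite scalerBr scalerA divff ?scale1r ?gt_eqF // scaleNr opprK.
rewrite qZ // -(ler_pM2l s0) mulrBr mulrA divff ?mul1r ?gt_eqF //; lra.
Qed.

Lemma adjoin_extension : dominated_extension adjoin adjoin_fun.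
Proof.
have adjoin_id d : D d -> adjoin d by move=> Dd; exists d, 0; rewrite scale0r addr0.
have adjoin_lin a d1 t1 d2 t2 : a *: (d1 + t1 *: x0) + (d2 + t2 *: x0) =
    (a *: d1 + d2) + (a * t1 + t2) *: x0.
  by rewrite scalerDr scalerA scalerDl addrACA.
split.
- split; first exact/adjoin_id/(subspace0 sD).
  move=> a _ _ [d1 [t1 [D1 ->]]] [d2 [t2 [D2 ->]]].
  by exists (a *: d1 + d2), (a * t1 + t2); split; [apply: sD.2 | apply: adjoin_lin].
- by move=> x Mx; apply/adjoin_id/(ext_sub hDg).
- move=> _ [d [t [Dd ->]]]; apply: (subspaceD sP); first exact: (ext_sup hDg).
  exact: (subspaceZ sP).
- move=> a _ _ [d1 [t1 [D1 ->]]] [d2 [t2 [D2 ->]]].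
  rewrite adjoin_lin !adjoin_funE ?gD //; last by apply: sD.2.
  ring.
- by move=> x Mx; rewrite adjoin_fun_id ?(ext_eq hDg) //; apply: (ext_sub hDg).
- by move=> _ [d [t [Dd ->]]]; rewrite adjoin_funE //; apply: adjoin_fun_le.
Qed.

End AdjoinVector.

Record partial_extension := PartialExtension {
  pdom : V -> Prop; pfun : V -> R; pvalid : dominated_extension pdom pfun }.

Definition extends (s t : partial_extension) : Prop :=
  (forall x, pdom s x -> pdom t x) /\ (forall x, pdom s x -> pfun t x = pfun s x).

Section ChainUnion.
Variable A : set partial_extension.
Hypothesis Atot : forall s t, A s -> A t -> extends s t \/ extends t s.

Definition chain_dom x := M x \/ exists s, A s /\ pdom s x.

Definition chain_fun x :=
  if pselect (exists s, A s /\ pdom s x) is left H then pfun (projT1 (cid H)) x else l x.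

Lemma chain_funE s x : A s -> pdom s x -> chain_fun x = pfun s x.
Proof.
move=> As sx; rewrite /chain_fun; case: pselect => [H|[]]; last by exists s.
case: (cid H) => t [At tx] /=.
by case: (Atot As At) => [[_ ->]|[_ ->]].
Qed.

Lemma chain_funM x : M x -> chain_fun x = l x.
Proof.
move=> Mx; rewrite /chain_fun; case: pselect => [H|//].
by case: (cid H) => t [At tx] /=; apply: (ext_eq (pvalid t)).
Qed.

Lemma chain_dom2 x y : chain_dom x -> chain_dom y ->
  (M x /\ M y) \/ exists s, [/\ A s, pdom s x & pdom s y].
Proof.
have Mdom s z : M z -> pdom s z by apply: (ext_sub (pvalid s)).
move=> [Mx|[s [As sx]]] [My|[t [At ty]]].
- by left.
- by right; exists t; split=> //; apply: Mdom.
- by right; exists s; split=> //; apply: Mdom.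
- right; case: (Atot As At) => [[st _]|[ts _]].
    by exists t; split=> //; apply: st.
  by exists s; split=> //; apply: ts.
Qed.

Lemma chain_extension : dominated_extension chain_dom chain_fun.
Proof.
split.
- split; first by left; apply: subspace0.
  move=> a x y Dx Dy; have [[Mx My]|[s [As sx sy]]] := chain_dom2 Dx Dy.
    by left; apply: sM.2.
  by right; exists s; split=> //; apply: (ext_subspace (pvalid s)).2.
- by move=> x Mx; left.
- by move=> x [Mx|[s [As sx]]]; [apply: MP | apply: (ext_sup (pvalid s))].
- move=> a x y Dx Dy; have [[Mx My]|[s [As sx sy]]] := chain_dom2 Dx Dy.
    by rewrite !chain_funM //; [apply: lM | apply: sM.2].
  have [sub _ _ lin _ _] := pvalid s.
  by rewrite !(chain_funE As) //; [apply: lin | apply: sub.2].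
- exact: chain_funM.
- move=> x [Mx|[s [As sx]]]; first by rewrite chain_funM //; apply: lq.
  by rewrite (chain_funE As) //; apply: (ext_le (pvalid s)).
Qed.

End ChainUnion.

Lemma maximal_extension : exists t : partial_extension,
  forall s, extends t s -> extends s t.
Proof.
have [| | |t tmax] := @ZL_preorder _ (PartialExtension dominated_extension_id)
  (fun s t => `[< extends s t >]).
- by move=> t; apply/asboolP; split.
- move=> r s t /asboolP [rs1 rs2] /asboolP [st1 st2]; apply/asboolP; split.
    by move=> x /rs1 /st1.
  by move=> x rx; rewrite st2 ?rs2 //; apply: rs1.
- move=> A Atot.
  have tot s t : A s -> A t -> extends s t \/ extends t s.
    by move=> As At; case: (Atot s t As At) => /asboolP; [left|right].
  exists (PartialExtension (chain_extension tot)) => s As; apply/asboolP.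
  by split=> /= x sx; [right; exists s | apply: chain_funE].
by exists t => s /asboolT /tmax /asboolP.
Qed.

Lemma hahn_banach_sublinear : exists L, [/\ linear_on P L,
  (forall x, M x -> L x = l x) & (forall x, P x -> L x <= q x)].
Proof.
have [[D g hDg] tmax] := maximal_extension.
have DP x : P x -> D x.
  move=> Px; apply: contrapT => nDx.
  have hext := adjoin_extension hDg Px nDx.
  have grow : extends (PartialExtension hDg) (PartialExtension hext).
    split=> /= d Dd; first by exists d, 0; rewrite scale0r addr0.
    exact: adjoin_fun_id.
  have [/= sub _] := tmax _ grow; apply/nDx/sub.
  by exists 0, 1; rewrite scale1r add0r; split=> //; apply: subspace0 (ext_subspace hDg).
exists g; split.
- by move=> a x y Px Py; apply: (ext_linear hDg); apply: DP.
- exact: (ext_eq hDg).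
- by move=> x Px; apply: (ext_le hDg); apply: DP.
Qed.

End HahnBanachSublinear.

Section GaugeHahnBanach.
Local Open Scope classical_set_scope.
Variables (R : realType) (V : lmodType R) (P M A : V -> Prop) (l : V -> R).
Hypotheses (sP : is_subspace P) (sM : is_subspace M) (MP : forall x, M x -> P x)
  (AP : forall x, A x -> P x)
  (Aconv : forall x y (a c : R), A x -> A y -> `|a| + `|c| <= 1 -> A (a *: x + c *: y))
  (Aabs : forall x, P x -> exists s : R, 0 < s /\ A (s^-1 *: x))
  (lM : linear_on M l) (lA : forall x, M x -> A x -> l x <= 1).

Lemma abs_convex_balanced x a : A x -> `|a| <= 1 -> A (a *: x).
Proof.
move=> Ax ha; have := @Aconv x x a 0 Ax Ax.
by rewrite normr0 addr0 scale0r addr0; apply.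
Qed.

Definition gauge x := inf [set s : R | 0 < s /\ A (s^-1 *: x)].

Lemma gauge_le x s : 0 < s -> A (s^-1 *: x) -> gauge x <= s.
Proof. by move=> s0 As; apply: ge_inf => //; exists 0 => r [/ltW]. Qed.

Lemma gauge_ge0 x : P x -> 0 <= gauge x.
Proof.
move=> Px; apply: lb_le_inf; first by have [s hs] := Aabs Px; exists s.
by move=> s [/ltW].
Qed.

Lemma gauge_lt x s : P x -> gauge x < s -> A (s^-1 *: x).
Proof.
move=> Px /inf_lt [|s' [s'0 As'] s's]; first by have [s' hs'] := Aabs Px; exists s'.
have s0 : 0 < s by apply: lt_trans s's.
have -> : s^-1 *: x = (s' / s) *: (s'^-1 *: x).
  by rewrite scalerA mulrAC mulrV ?unitfE ?gt_eqF // mul1r.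
apply: abs_convex_balanced => //.
rewrite ger0_norm; first by rewrite ler_pdivrMr // mul1r ltW.
by rewrite divr_ge0 // ltW.
Qed.

Lemma gauge_le1 x : A x -> gauge x <= 1.
Proof. by move=> Ax; apply: gauge_le => //; rewrite invr1 scale1r. Qed.

Lemma gaugeD x y : P x -> P y -> gauge (x + y) <= gauge x + gauge y.
Proof.
move=> Px Py; apply/ler_gtP => z hz.
pose e := (z - (gauge x + gauge y)) / 2.
have e0 : 0 < e by rewrite divr_gt0 // subr_gt0.
have hx0 := gauge_ge0 Px; have hy0 := gauge_ge0 Py.
have Ax : A ((gauge x + e)^-1 *: x) by apply: gauge_lt; rewrite ?ltrDl.
have Ay : A ((gauge y + e)^-1 *: y) by apply: gauge_lt; rewrite ?ltrDl.
set sx := gauge x + e in Ax; set sy := gauge y + e in Ay.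
have sx0 : 0 < sx by rewrite /sx; lra.
have sy0 : 0 < sy by rewrite /sy; lra.
have -> : z = sx + sy by rewrite /sx /sy /e; field.
apply: gauge_le; first exact: addr_gt0.
have -> : (sx + sy)^-1 *: (x + y) =
    (sx / (sx + sy)) *: (sx^-1 *: x) + (sy / (sx + sy)) *: (sy^-1 *: y).
  by rewrite !scalerA scalerDr; congr (_ *: _ + _ *: _); field; lra.
have w0 : 0 < sx + sy by apply: addr_gt0.
apply: Aconv => //; rewrite !ger0_norm; first by rewrite -mulrDl divff // gt_eqF.
  by apply: divr_ge0; apply: ltW.
by apply: divr_ge0; apply: ltW.
Qed.

Lemma gaugeZ t x : 0 < t -> P x -> gauge (t *: x) = t * gauge x.
Proof.
move=> t0 Px; have Ptx : P (t *: x) by apply: (subspaceZ sP).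
apply/eqP; rewrite eq_le; apply/andP; split.
- apply/ler_gtP => z hz.
  have hs : gauge x < z / t by rewrite ltr_pdivlMr // mulrC.
  have z0 : 0 < z / t by apply: le_lt_trans (gauge_ge0 Px) hs.
  have -> : z = t * (z / t) by rewrite mulrC divfK // gt_eqF.
  apply: gauge_le; first exact: mulr_gt0.
  by rewrite scalerA invfM mulrAC mulVf ?gt_eqF // mul1r; apply: gauge_lt.
- rewrite -ler_pdivlMl //; apply/ler_gtP => z hz.
  move: hz; rewrite ltr_pdivrMl // => hz.
  have z0 : 0 < z by rewrite -(pmulr_rgt0 _ t0); apply: le_lt_trans (gauge_ge0 Ptx) hz.
  apply: gauge_le => //.
  by have := gauge_lt Ptx hz; rewrite scalerA invfM mulrAC mulVf ?gt_eqF // mul1r.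
Qed.

Lemma le_gauge x : M x -> l x <= gauge x.
Proof.
move=> Mx; apply/ler_gtP => s hs.
have s0 : 0 < s by apply: le_lt_trans (gauge_ge0 (MP Mx)) hs.
have := lA (subspaceZ sM s^-1 Mx) (gauge_lt (MP Mx) hs).
by rewrite (linear_onZ sM lM) // -ler_pdivlMl ?invr_gt0 // invrK mulr1.
Qed.

Lemma hahn_banach_abs_convex_real : exists L, [/\ linear_on P L,
  (forall x, M x -> L x = l x) & (forall x, A x -> `|L x| <= 1)].
Proof.
have [L [hL hLM hLq]] := hahn_banach_sublinear sP sM MP gaugeD gaugeZ lM le_gauge.
exists L; split=> // x Ax.
have AN : A (- x) by rewrite -scaleN1r; apply: abs_convex_balanced; rewrite ?normrN ?normr1.
have h1 : L x <= 1 by apply: le_trans (gauge_le1 Ax); apply/hLq/AP.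
have h2 : L (- x) <= 1 by apply: le_trans (gauge_le1 AN); apply/hLq/AP.
rewrite (linear_onN sP hL (AP Ax)) in h2.
by rewrite ler_norml; apply/andP; split; lra.
Qed.

End GaugeHahnBanach.

(* The components of [complex], not the generic ['Re]/['Im] of a numClosedFieldType. *)
Notation Re := complex.Re.
Notation Im := complex.Im.

Section Realification.
Local Open Scope complex_scope.
Variables (R : realType) (V : lmodType R[i]).

Definition realified : Type := V.
HB.instance Definition _ := GRing.Zmodule.on realified.

Definition realified_scale (r : R) (v : realified) : realified := r%:C *: (v : V).

Lemma realified_scaleA a b v :
  realified_scale a (realified_scale b v) = realified_scale (a * b) v.
Proof. by rewrite /realified_scale scalerA -rmorphM. Qed.

Lemma realified_scale1 : left_id 1 realified_scale.
Proof. by move=> v; rewrite /realified_scale rmorph1 scale1r. Qed.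

Lemma realified_scaleDr : right_distributive realified_scale +%R.
Proof. by move=> a u v; rewrite /realified_scale scalerDr. Qed.

Lemma realified_scaleDl v : {morph realified_scale^~ v : a b / a + b}.
Proof. by move=> a b; rewrite /realified_scale rmorphD scalerDl. Qed.

HB.instance Definition _ := GRing.Zmodule_isLmodule.Build R realified
  realified_scaleA realified_scale1 realified_scaleDr realified_scaleDl.

Lemma realified_subspace (P : V -> Prop) : is_subspace P -> @is_subspace R realified P.
Proof. by move=> sP; split; [exact: sP.1 | move=> a x y; exact: sP.2 a%:C x y]. Qed.

End Realification.

Section ComplexFacts.
Local Open Scope complex_scope.
Variable R : realType.

Lemma Re_realCM (a : R) (z : R[i]) : Re (a%:C * z) = a * Re z.
Proof. by case: z => x y /=; rewrite mul0r subr0. Qed.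

Lemma normC_realC (a : R) : `|a%:C| = `|a|%:C.
Proof. by rewrite normc_def /= expr0n /= addr0 sqrtr_sqr. Qed.

Lemma lecR1 (a : R) : (a%:C <= 1) = (a <= 1).
Proof. by rewrite -lecR. Qed.

Lemma gtc0_real (s : R[i]) : 0 < s -> s = (Re s)%:C /\ 0 < Re s.
Proof. by case: s => x y; rewrite ltcE /= => /andP [/eqP -> h]. Qed.

End ComplexFacts.

Section Complexification.
Local Open Scope complex_scope.
Variables (R : realType) (V : lmodType R[i]) (P : V -> Prop) (Lr : V -> R).
Hypotheses (sP : is_subspace P) (LrP : @linear_on R (realified V) P Lr).

Definition complexify x : R[i] := (Lr x)%:C - 'i%C * (Lr ('i%C *: x))%:C.

Lemma Re_complexify x : Re (complexify x) = Lr x.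
Proof. by rewrite /= mul0r mulr0 !subr0. Qed.

Let sPr := realified_subspace sP.

Let LrD x y : P x -> P y -> Lr (x + y) = Lr x + Lr y.
Proof. exact: (linear_onD LrP). Qed.

Let LrZ (r : R) x : P x -> Lr (r%:C *: x) = r * Lr x.
Proof. exact: (linear_onZ sPr LrP). Qed.

Let LrN x : P x -> Lr (- x) = - Lr x.
Proof. exact: (linear_onN sPr LrP). Qed.

Let Pi x : P x -> P ('i%C *: x).
Proof. exact: subspaceZ. Qed.

Lemma complexifyD x y : P x -> P y -> complexify (x + y) = complexify x + complexify y.
Proof.
move=> Px Py; have Pix := Pi Px; have Piy := Pi Py.
rewrite /complexify scalerDr !LrD //.
by rewrite !rmorphD /= mulrDr opprD addrACA.
Qed.

Lemma complexifyZ a x : P x -> complexify (a *: x) = a * complexify x.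
Proof.
have ii : 'i%C * 'i%C = -1 :> R[i] by rewrite -expr2 sqr_i.
have complexifyR (r : R) v : P v -> complexify (r%:C *: v) = r%:C * complexify v.
  move=> Pv; have Piv := Pi Pv.
  rewrite /complexify scalerA (mulrC 'i%C r%:C) -scalerA !LrZ //.
  by rewrite !rmorphM /= mulrBr mulrCA.
have complexifyI v : P v -> complexify ('i%C *: v) = 'i%C * complexify v.
  move=> Pv; rewrite /complexify scalerA ii scaleN1r LrN // rmorphN /=.
  by rewrite mulrBr mulrN opprK mulrA ii mulN1r addrC opprK.
move=> Px; have PRe : P ((Re a)%:C *: x) by apply: subspaceZ.
have PIm : P ((Im a)%:C *: x) by apply: subspaceZ.
have -> : a *: x = (Re a)%:C *: x + 'i%C *: ((Im a)%:C *: x).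
  by rewrite scalerA -scalerDl {1}[a]complexE.
have PiIm := Pi PIm.
rewrite complexifyD // complexifyI // !complexifyR // mulrA -mulrDl.
by congr (_ * _); exact: (esym (complexE a)).
Qed.

Lemma complexify_linear : linear_on P complexify.
Proof.
by move=> a x y Px Py; rewrite complexifyD ?complexifyZ //; apply: subspaceZ.
Qed.

(* Rotate [x] by the phase of [complexify x] to reduce to the real bound. *)
Lemma complexify_abs_le1 (A : V -> Prop) x : (forall x, A x -> P x) ->
  (forall a x, A x -> `|a| <= 1 -> A (a *: x)) ->
  (forall x, A x -> `|Lr x| <= 1) -> A x -> `|complexify x| <= 1.
Proof.
move=> AP Abal LrA Ax; have Px := AP x Ax; set z := complexify x.
have [->|z0] := eqVneq z 0; first by rewrite normr0.
pose w := `|z| / z.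
have Aw : A (w *: x).
  by apply: Abal => //; rewrite /w normf_div normr_id divff // normr_eq0.
have Lw : complexify (w *: x) = `|z| by rewrite complexifyZ // /w divfK.
have := LrA _ Aw; rewrite -Re_complexify Lw.
have -> : `|z| = (Re `|z|)%:C by rewrite RRe_real // normr_real.
by rewrite lecR1 => /(le_trans (ler_norm _)).
Qed.

End Complexification.

Section ComplexHahnBanach.
Local Open Scope complex_scope.
Variables (R : realType) (V : lmodType R[i]) (P M A : V -> Prop) (l : V -> R[i]).
Hypotheses (sP : is_subspace P) (sM : is_subspace M) (MP : forall x, M x -> P x)
  (AP : forall x, A x -> P x)
  (Aconv : forall x y (a c : R[i]), A x -> A y -> `|a| + `|c| <= 1 -> A (a *: x + c *: y))
  (Aabs : forall x, P x -> exists s : R[i], 0 < s /\ A (s^-1 *: x))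
  (lM : linear_on M l) (lA : forall x, M x -> A x -> `|l x| <= 1).

Lemma hahn_banach_abs_convex_complex : exists L, [/\ linear_on P L,
  (forall x, M x -> L x = l x) & (forall x, A x -> `|L x| <= 1)].
Proof.
have Aconvr (x y : realified V) (a c : R) : A x -> A y -> `|a| + `|c| <= 1 ->
    A (a *: x + c *: y).
  by move=> Ax Ay h; apply: Aconv => //; rewrite !normC_realC -rmorphD lecR1.
have Aabsr (x : realified V) : P x -> exists s : R, 0 < s /\ A (s^-1 *: x).
  move=> Px; have [s [/gtc0_real [es s0] As]] := Aabs Px.
  by exists (Re s); split=> //; move: As; rewrite {1}es -rmorphV // unitfE gt_eqF.
have lMr : @linear_on R (realified V) M (fun x => Re (l x)).
  move=> a x y Mx My; rewrite /=.
  have -> : l (a *: (x : realified V) + y) = a%:C * l x + l y by apply: lM.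
  by rewrite raddfD /= Re_realCM.
have lAr (x : realified V) : M x -> A x -> Re (l x) <= 1.
  move=> Mx Ax; apply: le_trans (ler_norm _) _; rewrite -lecR1.
  exact: le_trans (normc_ge_Re (l x)) (lA Mx Ax).
have [Lr [LrP LrM LrA]] := hahn_banach_abs_convex_real (realified_subspace sP)
  (realified_subspace sM) MP AP Aconvr Aabsr lMr lAr.
exists (complexify Lr); split.
- exact: complexify_linear.
- move=> x Mx; have Mix : M ('i%C *: x) by apply: subspaceZ.
  rewrite /complexify !LrM // (linear_onZ sM lM) //; case: (l x) => a c.
  by simpc.
- move=> x Ax; apply: (complexify_abs_le1 sP LrP AP _ LrA Ax) => a y Ay ha.
  by have := Aconv Ay Ay (_ : `|a| + `|0| <= 1); rewrite normr0 addr0 scale0r addr0; apply.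
Qed.

End ComplexHahnBanach.

Lemma hahn_banach_abs_convex (R : realType) (b : bool) (V : lmodType (RC R b))
  (P M A : V -> Prop) (l : V -> RC R b) :
  is_subspace P -> is_subspace M -> (forall x, M x -> P x) -> (forall x, A x -> P x) ->
  (forall x y (a c : RC R b), A x -> A y -> `|a| + `|c| <= 1 -> A (a *: x + c *: y)) ->
  (forall x, P x -> exists s : RC R b, 0 < s /\ A (s^-1 *: x)) ->
  linear_on M l -> (forall x, M x -> A x -> `|l x| <= 1) ->
  exists L, [/\ linear_on P L, (forall x, M x -> L x = l x) &
    (forall x, A x -> `|L x| <= 1)].
Proof.
case: b V P M A l => V P M A l sP sM MP AP Aconv Aabs lM lA.
  apply: hahn_banach_abs_convex_real => // x Mx Ax.
  exact: le_trans (ler_norm _) (lA x Mx Ax).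
exact: hahn_banach_abs_convex_complex.
Qed.

Definition inv_succ {K : numFieldType} (k : nat) : K := (k.+1%:R)^-1.

Lemma inv_succ_gt0 {K : numFieldType} k : 0 < inv_succ k :> K.
Proof. by rewrite invr_gt0 ltr0Sn. Qed.

Lemma inv_succ_small (R : realType) (b : bool) (eta : RC R b) : 0 < eta ->
  exists N, forall k, (N <= k)%N -> inv_succ k < eta.
Proof.
have real_case (r : R) : 0 < r -> exists N : nat, (N.+1%:R : R)^-1 < r.
  move=> r0; exists (Num.bound r^-1); have ri : 0 <= r^-1 by rewrite invr_ge0 ltW.
  rewrite -[ltRHS]invrK ltf_pV2 ?posrE ?ltr0Sn ?invr_gt0 //.
  by apply: lt_le_trans (archi_boundP ri) _; rewrite ler_nat.
move=> e0; have [N hN] : exists N : nat, (N.+1%:R : RC R b)^-1 < eta.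
  case: b eta e0 => eta; first exact: real_case.
  move=> /gtc0_real [-> /real_case [N hN]]; exists N.
  by rewrite -(rmorph_nat (real_complex R)) -rmorphV ?unitfE ?pnatr_eq0 //= ltcR.
exists N => k Nk; apply: le_lt_trans hN.
by rewrite /inv_succ lef_pV2 ?posrE ?ltr0Sn // ler_nat ltnS.
Qed.

Section ScalarSpace.
Variables (K : numFieldType) (W : wdata K)
  (domK : Mset W -> (Omega W -> K^o) -> Prop)
  (TK : Mset W -> (Omega W -> K^o) -> X W -> K^o).
Hypotheses (HW : wdata_ok W) (HlinK : lin_ops domK TK).

Local Notation FT := (Omega W -> K^o).
Local Notation FVK := (FVK domK TK).
Local Notation bndK := (bndK TK).
Local Notation dualFV := (dualFV domK TK).

Lemma emb_omega l m x : Ml W l m -> omega W m (emb W x).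
Proof.
case: HW => _ _ _ _ [Htop _ _ _ [Homega _ _ _]] Hm.
by apply/Homega/Htop; exists l.
Qed.

Lemma nu_ge0 j l m x : 0 <= nu W j l m x.
Proof. by case: HW => _ _ _ _ [_ _ _ _ [_ _ h _]]. Qed.

Lemma fsubE (g h : FT) : fadd g (fscale (-1) h) = g - h.
Proof. by apply: funext => x; rewrite /fadd /fscale scaleN1r. Qed.

Lemma domK_lin m a (g h : FT) : domK m g -> domK m h -> domK m (a *: g + h).
Proof. by move=> dg dh; case: (HlinK m) => _ /(_ a _ _ dg dh) []. Qed.

Lemma TK_lin m a (g h : FT) y : domK m g -> domK m h -> omega W m y ->
  TK m (a *: g + h) y = a * TK m g y + TK m h y.
Proof. by move=> dg dh om; case: (HlinK m) => _ /(_ a _ _ dg dh) [_ /(_ y om)]. Qed.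

Lemma domK0 m : domK m 0. Proof. by case: (HlinK m). Qed.

Lemma TK0 m y : omega W m y -> TK m 0 y = 0.
Proof.
move=> om; have := TK_lin 1 (domK0 m) (domK0 m) om.
rewrite scale1r addr0 mul1r => h.
by apply: (addIr (TK m 0 y)); rewrite add0r -h.
Qed.

Lemma TK_comb m a c (g1 g2 : FT) y : domK m g1 -> domK m g2 -> omega W m y ->
  TK m (a *: g1 + c *: g2) y = a * TK m g1 y + c * TK m g2 y.
Proof.
move=> d1 d2 om; have d2' : domK m (c *: g2).
  by rewrite -[_ *: _]addr0; apply: domK_lin => //; apply: domK0.
rewrite TK_lin // -[c *: g2]addr0 TK_lin ?TK0 ?addr0 //; exact: domK0.
Qed.

Lemma TKZ m a (g : FT) y : domK m g -> omega W m y -> TK m (a *: g) y = a * TK m g y.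
Proof.
move=> dg om; rewrite -[a *: g]addr0 TK_lin ?TK0 ?addr0 //; exact: domK0.
Qed.

Lemma bndK0 i : bndK i 0 0.
Proof. by move=> x m Hm; rewrite (TK0 (emb_omega x Hm)) /qK normr0 mul0r. Qed.

Lemma bndK_le i (g : FT) d d' : bndK i g d -> d <= d' -> bndK i g d'.
Proof. by move=> h dd x m Hm; apply: le_trans (h x m Hm) dd. Qed.

Lemma bndK_ge0 i (g : FT) d : bndK i g d -> 0 <= d.
Proof.
case: HW => [[x] _ _ Hl _] h; have [m Hm] := Hl i.2.
by apply: le_trans (h x m Hm); apply: mulr_ge0; [apply: normr_ge0 | apply: nu_ge0].
Qed.

Lemma bndK_comb i a c (g1 g2 : FT) d1 d2 : FVK g1 -> FVK g2 ->
  bndK i g1 d1 -> bndK i g2 d2 -> bndK i (a *: g1 + c *: g2) (`|a| * d1 + `|c| * d2).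
Proof.
move=> [dg1 _ _] [dg2 _ _] h1 h2 x m Hm.
rewrite /qK TK_comb //; last exact: emb_omega Hm.
apply: le_trans (_ : (`|a| * `|TK m g1 (emb W x)| + `|c| * `|TK m g2 (emb W x)|)
    * nu W i.1 i.2 m x <= _).
  by apply: ler_wpM2r; [apply: nu_ge0 | rewrite -!normrM; apply: ler_normD].
by rewrite mulrDl -!mulrA; apply: lerD; apply: ler_wpM2l => //; [apply: h1 | apply: h2].
Qed.

Lemma FVK0 : FVK 0.
Proof.
split; [exact: domK0 | by move=> m _ y; apply: TK0 |].
by move=> j l []; exists 0; apply: (bndK0 (i := (j, l))).
Qed.

Lemma FVK_comb a c (g1 g2 : FT) : FVK g1 -> FVK g2 -> FVK (a *: g1 + c *: g2).
Proof.
move=> F1 F2; have [dg1 zg1 bg1] := F1; have [dg2 zg2 bg2] := F2.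
have dcomb m : domK m (a *: g1 + c *: g2).
  apply: domK_lin => //; rewrite -[_ *: _]addr0; apply: domK_lin => //; exact: domK0.
split=> // [m Hm y om|j l []].
  by rewrite TK_comb // zg1 // zg2 // !mulr0 addr0.
have [d1 h1] := bg1 j l tt; have [d2 h2] := bg2 j l tt.
by exists (`|a| * d1 + `|c| * d2); apply: (bndK_comb (i := (j, l))).
Qed.

Lemma FVKZ a (g : FT) : FVK g -> FVK (a *: g).
Proof.
by move=> Fg; have := FVK_comb a 0 Fg FVK0; rewrite scaler0 addr0.
Qed.

Lemma FVK_lin a (g h : FT) : FVK g -> FVK h -> FVK (a *: g + h).
Proof. by move=> Fg Fh; rewrite -[h]scale1r; apply: FVK_comb. Qed.

Lemma FVK_subspace : is_subspace FVK.
Proof. by split=> [|a g h]; [exact: FVK0 | exact: FVK_lin]. Qed.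

Lemma FVKB (g h : FT) : FVK g -> FVK h -> FVK (g - h).
Proof. by move=> Fg Fh; rewrite -[g]scale1r -scaleN1r; apply: FVK_comb. Qed.

Lemma dual_lin y a (g h : FT) : dualFV y -> FVK g -> FVK h ->
  y (a *: g + h) = a * y g + y h.
Proof. by move=> [hl _] Fg Fh; apply: hl. Qed.

Lemma dual0 y : dualFV y -> y 0 = 0.
Proof.
move=> dy; have := dual_lin 1 dy FVK0 FVK0; rewrite scaler0 addr0 mul1r => h.
by apply: (addIr (y 0)); rewrite add0r -h.
Qed.

Lemma dualZ y a (g : FT) : dualFV y -> FVK g -> y (a *: g) = a * y g.
Proof.
by move=> dy Fg; rewrite -[a *: g]addr0 dual_lin ?dual0 ?addr0 //; apply: FVK0.
Qed.

Lemma dualB y (g h : FT) : dualFV y -> FVK g -> FVK h -> y (g - h) = y g - y h.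
Proof. by move=> dy Fg Fh; rewrite addrC -scaleN1r dual_lin // mulN1r addrC. Qed.

(* A bound [|z| <= C * e] forces [C * e] to be real and nonnegative. *)
Lemma bound_le_normM (C e z : K) : `|z| <= C * e -> 0 <= e -> C * e <= `|C| * e.
Proof.
move=> h e0; have h0 : 0 <= C * e by apply: le_trans h.
by rewrite -[leLHS](ger0_norm h0) normrM (ger0_norm e0).
Qed.

Lemma dual_comb a y1 y2 : dualFV y1 -> dualFV y2 ->
  dualFV (fun g => a * y1 g + y2 g).
Proof.
move=> d1 d2; split=> [a' g h Fg Fh|]; first by rewrite !dual_lin //; ring.
case: (d1) (d2) => _ [s1 [C1 h1]] [_ [s2 [C2 h2]]].
(* The extra index [(j, l)] forces [0 <= b] even when [s1] and [s2] are empty. *)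
have [[x] [j] [l] _ _] := HW.
exists ((j, l) :: s1 ++ s2), (`|a| * `|C1| + `|C2|) => g Fg b hb.
have b0 : 0 <= b by apply: (bndK_ge0 (hb _ (or_introl erefl))).
have hb1 : `|y1 g| <= C1 * b.
  by apply: h1 => // i hi; apply: hb; right; apply: List.in_or_app; left.
have hb2 : `|y2 g| <= C2 * b.
  by apply: h2 => // i hi; apply: hb; right; apply: List.in_or_app; right.
apply: le_trans (ler_normD _ _) _; rewrite normrM mulrDl -mulrA.
apply: lerD; last exact: le_trans hb2 (bound_le_normM hb2 b0).
by apply: ler_wpM2l => //; exact: le_trans hb1 (bound_le_normM hb1 b0).
Qed.

Lemma open_dual (d : FT -> K) c r : dualFV d ->
  openFV domK TK (fun g => FVK g /\ `|d g - c| < r).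
Proof.
move=> dd g0 Fg0 [_ hg0]; case: (dd) => _ [s [C hC]].
pose r' := r - `|d g0 - c|.
have r'0 : 0 < r' by rewrite subr_gt0.
have C1 : 0 < `|C| + 1 by apply: ltr_wpDl.
pose eps := r' / (`|C| + 1).
have e0 : 0 < eps by apply: divr_gt0.
exists s, eps; split=> // g [Fg hb]; split=> //.
have Fd : FVK (g - g0) by apply: FVKB.
have hb' i : List.In i s -> bndK i (g - g0) eps.
  by move=> /hb [d1 [d1e]]; rewrite fsubE => h; apply: bndK_le h _; apply: ltW.
have h1 := hC _ Fd _ hb'; rewrite (dualB dd Fg Fg0) in h1.
have h2 : `|C| * eps < r'.
  by rewrite /eps mulrA ltr_pdivrMr // (mulrC r') mulrDl mul1r ltrDl.
rewrite -(subrK (d g0) (d g)) -addrA; apply: le_lt_trans (ler_normD _ _) _.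
rewrite -(subrK `|d g0 - c| r) ltrD2r.
exact: le_lt_trans (le_trans h1 (bound_le_normM h1 (ltW e0))) h2.
Qed.

Lemma closure_sub (A : FT -> Prop) g : (forall h, A h -> FVK h) -> A g ->
  closureFV domK TK A g.
Proof.
move=> AF Ag; split; first exact: AF.
move=> s eps e0; exists g; split=> //; split; first exact: AF.
by move=> i _; exists 0; split=> //; rewrite fsubE subrr; apply: bndK0.
Qed.

Lemma closure_abs_convex (A : FT -> Prop) : (forall h, A h -> FVK h) ->
  abs_convex A -> abs_convex (closureFV domK TK A).
Proof.
move=> AF Ac g1 g2 a c [F1 c1] [F2 c2] hac; split; first exact: FVK_comb.
move=> s eps e0; have e2 : 0 < eps / 2 by apply: divr_gt0.
have [h1 [A1 [Fh1 b1]]] := c1 s _ e2; have [h2 [A2 [Fh2 b2]]] := c2 s _ e2.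
exists (a *: h1 + c *: h2); split; first exact: Ac.
split=> [|i si]; first exact: FVK_comb.
have [d1 [d1e hd1]] := b1 i si; have [d2 [d2e hd2]] := b2 i si.
rewrite fsubE in hd1; rewrite fsubE in hd2; rewrite fsubE.
have -> : (a *: h1 + c *: h2) - (fadd (fscale a g1) (fscale c g2))
    = a *: (h1 - g1) + c *: (h2 - g2).
  by rewrite !scalerBr opprD addrACA.
exists (`|a| * d1 + `|c| * d2); split; last by apply: bndK_comb => //; apply: FVKB.
have d10 := bndK_ge0 hd1; have d20 := bndK_ge0 hd2.
apply: le_lt_trans (_ : (`|a| + `|c|) * (eps / 2) < eps).
  by rewrite mulrDl; apply: lerD; apply: ler_wpM2l => //; apply: ltW.
apply: le_lt_trans (_ : 1 * (eps / 2) < eps); first by apply: ler_wpM2r => //; apply: ltW.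
by rewrite mul1r ltr_pdivrMr // ltr_pMr // ltr1n.
Qed.

End ScalarSpace.

Section FrechetDual.
Variables (K : numFieldType) (E : lmodType K) (p : nat -> E -> K).
Hypothesis HE : frechet p.

Lemma p_ge0 n x : 0 <= p n x. Proof. by case: HE => h _ _ _ _; apply: h. Qed.
Lemma pD n x y : p n (x + y) <= p n x + p n y. Proof. by case: HE => _ h _ _ _; apply: h. Qed.
Lemma pZ n a x : p n (a *: x) = `|a| * p n x. Proof. by case: HE => _ _ h _ _; apply: h. Qed.
Lemma p0 n : p n 0 = 0. Proof. by rewrite -(scale0r 0) pZ normr0 mul0r. Qed.

Lemma p_mono n k x : (n <= k)%N -> p n x <= p k x.
Proof.
move=> /subnK <-; elim: (k - n)%N => [|j IH]; first by rewrite add0n.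
by apply: le_trans IH _; case: HE => _ _ _ h _; rewrite addSn; apply: h.
Qed.

Lemma dualE_lin e' a x y : dualE p e' -> e' (a *: x + y) = a * e' x + e' y.
Proof. by case=> h _; apply: h. Qed.

Lemma dualE0 e' : dualE p e' -> e' 0 = 0.
Proof.
move=> de; have := dualE_lin 1 0 0 de; rewrite scaler0 addr0 mul1r => h.
by apply: (addIr (e' 0)); rewrite add0r -h.
Qed.

Lemma dualEB e' x y : dualE p e' -> e' (x - y) = e' x - e' y.
Proof. by move=> de; rewrite addrC -scaleN1r dualE_lin // mulN1r addrC. Qed.

Lemma unit_ball_bound n e' x : (forall a x y, e' (a *: x + y) = a * e' x + e' y) ->
  (forall x, p n x < 1 -> `|e' x| <= 1) -> `|e' x| <= p n x.
Proof.
move=> hl he; have e'0 : e' 0 = 0.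
  by have := hl 1 0 0; rewrite scaler0 addr0 mul1r => /eqP; rewrite addrC -subr_eq subrr => /eqP.
apply/ler_gtP => z hz; have z0 : 0 < z by apply: le_lt_trans (p_ge0 n x) hz.
have : p n (z^-1 *: x) < 1 by rewrite pZ normfV (gtr0_norm z0) ltr_pdivrMl // mulr1.
move=> /he; rewrite -[_ *: x]addr0 hl e'0 addr0 normrM normfV (gtr0_norm z0).
by rewrite ler_pdivrMl // mulr1.
Qed.

Lemma polar_le n e' x : polarB p n e' -> `|e' x| <= p n x.
Proof. by move=> [[hl _] he]; apply: unit_ball_bound. Qed.

Lemma polar_mono n k e' : (n <= k)%N -> polarB p n e' -> polarB p k e'.
Proof. by move=> nk [de he]; split=> // x hx; apply/he/(le_lt_trans _ hx)/p_mono. Qed.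

Lemma polar0 n : polarB p n (fun _ => 0).
Proof.
split=> [|x _]; last by rewrite normr0.
split=> [a x y|]; first by rewrite mulr0 addr0.
by exists 0%N, 0 => x; rewrite normr0 mul0r.
Qed.

Lemma polar_comb n a c e1 e2 : polarB p n e1 -> polarB p n e2 -> `|a| + `|c| <= 1 ->
  polarB p n (fun x => a * e1 x + c * e2 x).
Proof.
move=> [d1 h1] [d2 h2] hac; split.
  split=> [a' x y|]; first by rewrite !dualE_lin //; ring.
  exists n, (`|a| + `|c|) => x; apply: le_trans (ler_normD _ _) _.
  by rewrite !normrM mulrDl; apply: lerD; apply: ler_wpM2l => //; apply: polar_le.
move=> x hx; apply: le_trans (ler_normD _ _) _; apply: le_trans hac.
by rewrite !normrM; apply: lerD; rewrite -[leRHS]mulr1; apply: ler_wpM2l => //;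
  [apply: h1 | apply: h2].
Qed.

Lemma dualE_polar e' : dualE p e' -> exists n0 (C : K), [/\ 0 < C,
  forall x, `|e' x| <= C * p n0 x &
  forall k, (n0 <= k)%N -> polarB p k (fun x => C^-1 * e' x)].
Proof.
move=> de; case: (de) => _ [n0 [C hC]].
have C0 : 0 < `|C| + 1 by apply: ltr_wpDl.
have hC' x : `|e' x| <= (`|C| + 1) * p n0 x.
  apply: le_trans (hC x) _; apply: le_trans (bound_le_normM (hC x) (p_ge0 n0 x)) _.
  by apply: ler_wpM2r; [apply: p_ge0 | rewrite lerDl].
exists n0, (`|C| + 1); split=> // k hk.
have normV x : `|(`|C| + 1)^-1 * e' x| <= 1 <-> `|e' x| <= `|C| + 1.
  by rewrite normrM normfV (gtr0_norm C0) ler_pdivrMl // mulr1.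
split.
  split=> [a x y|]; first by rewrite dualE_lin //; ring.
  by exists n0, 1 => x; rewrite mul1r normrM normfV (gtr0_norm C0) ler_pdivrMl.
move=> x hx; apply/normV; apply: le_trans (hC' x) _.
rewrite -[leRHS]mulr1 ler_pM2l //.
by apply: le_trans (p_mono _ hk) (ltW hx).
Qed.

End FrechetDual.

Section NormingFunctional.
Variables (R : realType) (b : bool) (E : lmodType (RC R b)) (p : nat -> E -> RC R b).
Hypothesis HE : frechet p.
Local Notation K := (RC R b).

Lemma unit_ball_abs_convex n x y (a c : K) : p n x < 1 -> p n y < 1 ->
  `|a| + `|c| <= 1 -> p n (a *: x + c *: y) < 1.
Proof.
move=> hx hy hac.
have lt_norm (d : K) w : p n w < 1 -> d != 0 -> `|d| * p n w < `|d|.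
  by move=> hw d0; rewrite -[ltRHS]mulr1 ltr_pM2l ?normr_gt0.
have le_norm (d : K) w : p n w < 1 -> `|d| * p n w <= `|d|.
  by move=> hw; rewrite -[leRHS]mulr1 ler_wpM2l // ltW.
apply: le_lt_trans (pD HE _ _ _) _; rewrite !(pZ HE).
have [a0|a0] := eqVneq a 0.
  move: hac; rewrite a0 normr0 mul0r !add0r => hc.
  have [->|c0] := eqVneq c 0; first by rewrite normr0 mul0r ltr01.
  exact: lt_le_trans (lt_norm _ _ hy c0) hc.
by apply: lt_le_trans hac; apply: ltr_leD; [apply: lt_norm | apply: le_norm].
Qed.

(* Hahn-Banach extension of [t z |-> t p_n(z)] from the line through [z]. *)
Lemma norming_functional n z : exists e', polarB p n e' /\ e' z = p n z.
Proof.
have [pz0|pz] := eqVneq (p n z) 0.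
  by exists (fun _ => 0); split; [exact: polar0 | rewrite pz0].
have z0 : z != 0 by apply: contra pz => /eqP ->; rewrite p0.
have scale_inj t t' : t *: z = t' *: z -> t = t'.
  move=> /eqP; rewrite -subr_eq0 -scalerBl scaler_eq0 (negPf z0) orbF subr_eq0.
  by move=> /eqP.
pose M x := exists t : K, x = t *: z.
pose l x := if pselect (M x) is left H then projT1 (cid H) * p n z else 0.
have lE t : l (t *: z) = t * p n z.
  rewrite /l; case: pselect => [H|[]]; last by exists t.
  by case: (cid H) => t' /= /scale_inj ->.
have sT : is_subspace (fun _ : E => True) by [].
have sM : is_subspace M.
  split=> [|a _ _ [t ->] [t' ->]]; first by exists 0; rewrite scale0r.
  by exists (a * t + t'); rewrite scalerDl scalerA.
have Aabs x : True -> exists s : K, 0 < s /\ p n (s^-1 *: x) < 1.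
  move=> _; have s0 : 0 < p n x + 1 by apply: ltr_wpDl => //; apply: (p_ge0 HE).
  exists (p n x + 1); split=> //.
  by rewrite (pZ HE) normfV (gtr0_norm s0) ltr_pdivrMl // mulr1 ltrDl ltr01.
have lM : linear_on M l by move=> a _ _ [t ->] [t' ->]; rewrite scalerA -scalerDl !lE; ring.
have lA x : M x -> p n x < 1 -> `|l x| <= 1.
  by case=> t -> h; rewrite lE normrM (ger0_norm (p_ge0 HE n z)) -(pZ HE) ltW.
have [L [hL hLM hLA]] := hahn_banach_abs_convex sT sM (fun x _ => I) (fun x _ => I)
  (@unit_ball_abs_convex n) Aabs lM lA.
have Llin a x y : L (a *: x + y) = a * L x + L y by apply: hL.
exists L; split.
  by split=> //; split=> //; exists n, 1 => x; rewrite mul1r (unit_ball_bound HE).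
have Mz : M (1 *: z) by exists 1.
by have := hLM _ Mz; rewrite lE mul1r scale1r.
Qed.

Lemma dualE_eq (z1 z2 : E) : (forall e', dualE p e' -> e' z1 = e' z2) -> z1 = z2.
Proof.
move=> h; apply/eqP; rewrite -subr_eq0; apply/eqP.
case: HE => _ _ _ _ [sep _]; apply: sep => n.
have [e' [pe <-]] := norming_functional n (z1 - z2).
by rewrite (dualEB _ _ pe.1) h ?subrr //; case: pe.
Qed.

End NormingFunctional.

Section FiniteCodimension.
Variables (K : fieldType) (V : lmodType K) (P : V -> Prop) (A : Type).
Hypothesis sP : is_subspace P.

Definition lincomb (cs : seq K) (ps : seq A) (F : A -> V -> K) (g : V) : K :=
  \sum_(ct <- zip cs ps) ct.1 * F ct.2 g.

Lemma lincomb_cons c cs a ps F g :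
  lincomb (c :: cs) (a :: ps) F g = c * F a g + lincomb cs ps F g.
Proof. by rewrite /lincomb /= big_cons. Qed.

Lemma lincomb_linear cs ps F : (forall a, List.In a ps -> linear_on P (F a)) ->
  linear_on P (lincomb cs ps F).
Proof.
elim: ps cs => [|a ps IH] [|c cs] hF k g h Pg Ph;
  try by rewrite /lincomb /= !big_nil mulr0 addr0.
have hFps a' : List.In a' ps -> linear_on P (F a') by move=> ?; apply/hF/or_intror.
rewrite !lincomb_cons (IH cs hFps) // (hF a (or_introl erefl)) //; ring.
Qed.

Definition kerproj (h : V -> K) (g1 g : V) : V := g - h g *: g1.

Section KernelProjection.
Variables (h : V -> K) (g1 : V).
Hypotheses (hP : linear_on P h) (Pg1 : P g1).

Lemma kerprojP g : P g -> P (kerproj h g1 g).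
Proof. by move=> Pg; apply: (subspaceB sP) => //; apply: (subspaceZ sP). Qed.

Lemma kerproj_ker g : h g1 = 1 -> P g -> h (kerproj h g1 g) = 0.
Proof.
move=> hg1 Pg; have Pg' : P (h g *: g1) by apply: (subspaceZ sP).
by rewrite (linear_onB hP) // (linear_onZ sP hP) // hg1 mulr1 subrr.
Qed.

Lemma linear_on_kerproj (f : V -> K) : linear_on P f ->
  linear_on P (fun g => f (kerproj h g1 g)).
Proof.
move=> hf c g g' Pg Pg' /=; have kg := kerprojP Pg; have kg' := kerprojP Pg'.
rewrite -hf //; congr f.
by rewrite /kerproj hP // scalerDl -scalerA scalerBr opprD addrACA.
Qed.

End KernelProjection.

(* Induction on [ps], projecting onto the kernel of [F a] along [g1] with [F a g1 = 1]. *)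
Lemma lincomb_of_kernel ps : forall (F : A -> V -> K) (phi : V -> K),
  (forall a, List.In a ps -> linear_on P (F a)) -> linear_on P phi ->
  (forall g, P g -> (forall a, List.In a ps -> F a g = 0) -> phi g = 0) ->
  exists cs : seq K, forall g, P g -> phi g = lincomb cs ps F g.
Proof.
elim: ps => [|a ps IH] F phi hF hphi hz.
  by exists [::] => g Pg; rewrite /lincomb big_nil; apply: hz.
have Fa := hF a (or_introl erefl).
have hFps a' : List.In a' ps -> linear_on P (F a') by move=> ?; apply/hF/or_intror.
have [[g0 [Pg0 nz]]|Fa0] := pselect (exists g0, P g0 /\ F a g0 != 0); last first.
  have hz' g : P g -> (forall a', List.In a' ps -> F a' g = 0) -> phi g = 0.
    move=> Pg h; apply: hz => // a' [<-|]; last exact: h.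
    by apply: contrapT => nz; apply: Fa0; exists g; split=> //; apply/eqP.
  have [cs hcs] := IH F phi hFps hphi hz'.
  by exists (0 :: cs) => g Pg; rewrite lincomb_cons mul0r add0r; apply: hcs.
pose g1 := (F a g0)^-1 *: g0.
have Pg1 : P g1 by apply: (subspaceZ sP).
have Fg1 : F a g1 = 1 by rewrite (linear_onZ sP Fa) // mulVf.
pose pi := kerproj (F a) g1.
have hz' g : P g -> (forall a', List.In a' ps -> F a' (pi g) = 0) -> phi (pi g) = 0.
  move=> Pg h; apply: hz => [|a' [<-|/h //]]; first exact: kerprojP.
  exact: kerproj_ker.
have [cs hcs] := IH (fun a' g => F a' (pi g)) _
  (fun a' ia => linear_on_kerproj Fa Pg1 (hFps a' ia)) (linear_on_kerproj Fa Pg1 hphi) hz'.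
exists ((phi g1 - lincomb cs ps F g1) :: cs) => g Pg.
have Pg' : P (F a g *: g1) by apply: (subspaceZ sP).
have Ppig : P (pi g) by apply: kerprojP.
have eg : phi g = phi (pi g) + F a g * phi g1.
  by rewrite -(linear_onZ sP hphi) // -(linear_onD hphi) // /pi /kerproj subrK.
have lcs := lincomb_linear cs hFps.
have epi : lincomb cs ps (fun a' g => F a' (pi g)) g =
    lincomb cs ps F g - F a g * lincomb cs ps F g1.
  by rewrite -(linear_onZ sP lcs) // -(linear_onB lcs).
by rewrite eg hcs // epi lincomb_cons; ring.
Qed.

End FiniteCodimension.

Section PointFunctionals.
Variables (K : numFieldType) (W : wdata K)
  (domK : Mset W -> (Omega W -> K^o) -> Prop)
  (TK : Mset W -> (Omega W -> K^o) -> X W -> K^o) (U : Mset W -> X W -> Prop).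
Hypotheses (HW : wdata_ok W) (HlinK : lin_ops domK TK) (HU : set_of_uniqueness domK TK U).

Local Notation FT := (Omega W -> K^o).
Local Notation FVK := (FVK domK TK).

Lemma U_omega m y : U m y -> omega W m y. Proof. by case: HU => h _; apply: h. Qed.

Lemma U_dual m y : U m y -> dualFV domK TK (TKx TK m y).
Proof. by case: HU => _ [h _]; apply: h. Qed.

Lemma U_uniq (g : FT) : FVK g -> (forall m y, U m y -> TK m g y = 0) -> g = 0.
Proof. by move=> Fg h; apply: funext => x; case: HU => _ [_ hu]; apply: hu. Qed.

Definition point_eval (t : Mset W * X W) (g : FT) : K := TK t.1 g t.2.

Lemma point_eval_linear t : U t.1 t.2 -> linear_on FVK (point_eval t).
Proof. by move=> Ut a g h [dg _ _] [dh _ _]; apply: TK_lin => //; apply: U_omega. Qed.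

(* Cover [C] by [|y| < eps] and by the neighbourhoods [|T_t g - T_t h| < |T_t h| / 2],
   which avoid every [g] vanishing at [t]; uniqueness of [U] makes this a cover. *)
Lemma compact_small_on_kernel (C : FT -> Prop) (y : FT -> K) (eps : K) :
  compactFV domK TK C -> dualFV domK TK y -> 0 < eps ->
  exists pts : seq (Mset W * X W), (forall t, List.In t pts -> U t.1 t.2) /\
    forall g, C g -> (forall t, List.In t pts -> point_eval t g = 0) -> `|y g| < eps.
Proof.
move=> [CF Ccov] dy e0.
pose I := option (FT * {t : Mset W * X W | U t.1 t.2}).
pose Vf (i : I) : FT -> Prop := match i with
  | None => fun g => FVK g /\ `|y g - 0| < eps
  | Some (h, t) => fun g => FVK g /\
      `|point_eval (sval t) g - point_eval (sval t) h| < `|point_eval (sval t) h| / 2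
  end.
have Vopen i : openFV domK TK (Vf i).
  case: i => [[h [[m x] Ut]]|]; last exact: (open_dual HW HlinK dy).
  exact: (open_dual HW HlinK (U_dual Ut)).
have Vcov g : C g -> exists i, Vf i g.
  move=> Cg; have Fg := CF g Cg.
  have [hy|hy] := pselect (`|y g| < eps); first by exists None; rewrite /= subr0.
  have [[m [x [Umx nz]]]|none] := pselect (exists m x, U m x /\ TK m g x != 0).
    exists (Some (g, exist _ (m, x) Umx)); split=> //=.
    by rewrite subrr normr0; apply: divr_gt0; rewrite ?normr_gt0.
  exfalso; apply: hy; suff -> : g = 0 by rewrite (dual0 HW HlinK dy) normr0.
  apply: U_uniq => // m x Umx; apply: contrapT => /eqP nz.
  by apply: none; exists m, x.
have [s hs] := Ccov _ Vf Vopen Vcov.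
exists (List.flat_map (fun i : I => if i is Some (_, t) then [:: sval t] else [::]) s).
split=> [t /List.in_flat_map [[[h [t' Ut']]|] [_ /= tin]]|g Cg hz]; try by case: tin => // <-.
have [[[h t]|] [si [Fg Vg]]] := hs g Cg; last by rewrite subr0 in Vg.
rewrite hz ?sub0r ?normrN in Vg; last by apply/List.in_flat_map; exists (Some (h, t)); split=> //; left.
by move: Vg; rewrite ltr_pdivlMr // mulr_natr mulr2n gtrDl normr_lt0.
Qed.

End PointFunctionals.

Definition absorbed {K : numFieldType} {V : lmodType K} (C : V -> Prop) (g : V) :=
  exists s : K, 0 < s /\ C (s^-1 *: g).

Lemma absorbed_subspace (K : numFieldType) (V : lmodType K) (C : V -> Prop) :
  (forall x y (a c : K), C x -> C y -> `|a| + `|c| <= 1 -> C (a *: x + c *: y)) ->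
  C 0 -> is_subspace (absorbed C).
Proof.
move=> Cconv C0; split; first by exists 1; rewrite invr1 scale1r.
move=> a x z [sx [sx0 Cx]] [sz [sz0 Cz]].
pose s := `|a| * sx + sz.
have s0 : 0 < s by apply: ltr_wpDl sz0; apply: mulr_ge0 => //; apply: ltW.
exists s; split=> //.
have -> : s^-1 *: (a *: x + z) = (a * sx / s) *: (sx^-1 *: x) + (sz / s) *: (sz^-1 *: z).
  rewrite scalerDr !scalerA; congr (_ *: _ + _ *: _).
    by rewrite mulrAC mulfK ?gt_eqF // mulrC.
  by rewrite mulrAC mulfV ?gt_eqF // mul1r.
apply: Cconv => //; rewrite !normrM !normfV (gtr0_norm s0) (gtr0_norm sx0) (gtr0_norm sz0).
by rewrite -mulrDl divff ?gt_eqF.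
Qed.

Section Approximation.
Variables (R : realType) (b : bool) (W : wdata (RC R b))
  (domK : Mset W -> (Omega W -> (RC R b)^o) -> Prop)
  (TK : Mset W -> (Omega W -> (RC R b)^o) -> X W -> (RC R b)^o)
  (U : Mset W -> X W -> Prop).
Hypotheses (HW : wdata_ok W) (HlinK : lin_ops domK TK) (HU : set_of_uniqueness domK TK U).

Local Notation K := (RC R b).
Local Notation FT := (Omega W -> K^o).
Local Notation FVK := (FVK domK TK).

(* On the kernel [M] of finitely many point functionals [|y| < eps] on [C], so [y / eps]
   extends to [L] with [|L| <= 1] on [C]; then [y - eps L] vanishes on that kernel. *)
Lemma dual_approx_on_compact (C : FT -> Prop) (y : FT -> K) (eps : K) :
  compactFV domK TK C -> abs_convex C -> C 0 -> dualFV domK TK y -> 0 < eps ->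
  exists cs pts, (forall t, List.In t pts -> U t.1 t.2) /\
    forall g, C g -> `|y g - lincomb cs pts (point_eval TK) g| <= eps.
Proof.
move=> Ccomp Cconv C0 dy e0; have CF := Ccomp.1.
have [pts [ptsU hsep]] := compact_small_on_kernel HW HlinK HU Ccomp dy e0.
pose P := absorbed C.
have sP : is_subspace P by apply: absorbed_subspace.
have PF g : P g -> FVK g.
  case=> s [s0 Cs]; have := FVKZ HW HlinK s (CF _ Cs).
  by rewrite scalerA divff ?gt_eqF // scale1r.
have CP g : C g -> P g by exists 1; rewrite invr1 scale1r.
pose M g := P g /\ forall t, List.In t pts -> point_eval TK t g = 0.
have sM : is_subspace M.
  split=> [|a x z [Px hx] [Pz hz]].
    split=> [|t it]; first exact: sP.1.
    by apply: (TK0 HlinK); exact: (U_omega HU (ptsU _ it)).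
  split=> [|t it]; first exact: sP.2.
  by rewrite (point_eval_linear HlinK HU (ptsU _ it)) ?hx ?hz ?mulr0 ?addr0 //; apply: PF.
pose l g := y g / eps.
have lM : linear_on M l.
  move=> a x z [/PF Fx _] [/PF Fz _].
  by rewrite /l (dual_lin _ dy) // mulrDl mulrA.
have lC g : M g -> C g -> `|l g| <= 1.
  move=> [Pg hg] Cg; rewrite /l normrM normfV (gtr0_norm e0) ler_pdivrMr // mul1r.
  exact/ltW/hsep.
have Cabs g : P g -> exists s : K, 0 < s /\ C (s^-1 *: g) by [].
have [L [hL hLM hLC]] := hahn_banach_abs_convex sP sM (fun g (Mg : M g) => Mg.1) CP Cconv Cabs lM lC.
pose phi g := y g - eps * L g.
have hphi : linear_on P phi.
  move=> a x z Px Pz; have Fx := PF _ Px; have Fz := PF _ Pz.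
  by rewrite /phi hL // (dual_lin _ dy) //; ring.
have hF t : List.In t pts -> linear_on P (point_eval TK t).
  by move=> it a x z /PF Fx /PF Fz; apply: (point_eval_linear HlinK HU (ptsU _ it)).
have hz g : P g -> (forall t, List.In t pts -> point_eval TK t g = 0) -> phi g = 0.
  by move=> Pg h; rewrite /phi hLM /l; [rewrite mulrC divfK ?gt_eqF // subrr | split].
have [cs hcs] := lincomb_of_kernel sP hF hphi hz.
exists cs, pts; split=> // g Cg; have Pg := CP g Cg.
rewrite -hcs // /phi opprB addrC subrK.
by rewrite normrM (gtr0_norm e0) -[leRHS]mulr1 ler_pM2l // hLC.
Qed.

End Approximation.

Section Restriction.
Variables (R : realType) (b : bool) (W : wdata (RC R b))
  (E : lmodType (RC R b)) (p : nat -> E -> RC R b)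
  (domK : Mset W -> (Omega W -> (RC R b)^o) -> Prop)
  (TK : Mset W -> (Omega W -> (RC R b)^o) -> X W -> (RC R b)^o)
  (domE : Mset W -> (Omega W -> E) -> Prop)
  (TE : Mset W -> (Omega W -> E) -> X W -> E)
  (U : Mset W -> X W -> Prop) (f : Mset W -> X W -> E).
Hypotheses (HW : wdata_ok W) (HE : frechet p) (HlinK : lin_ops domK TK)
  (Hcons : consistent domK TK p domE TE) (HMontel : semi_Montel domK TK)
  (HU : set_of_uniqueness domK TK U) (Hf : FVE'U_sb domK TK p U f).

Local Notation K := (RC R b).
Local Notation FT := (Omega W -> K^o).
Local Notation FVK := (FVK domK TK).
Local Notation dualFV := (dualFV domK TK).

Definition represents (e' : E -> K) (g : FT) :=
  FVK g /\ forall m y, U m y -> TK m g y = e' (f m y).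

(* The paper's f_e'; the default [0] only occurs for [e'] outside [E']. *)
Definition f_dual (e' : E -> K) : FT :=
  if pselect (exists g, represents e' g) is left H then projT1 (cid H) else 0.

Lemma f_dualP e' : dualE p e' -> represents e' (f_dual e').
Proof.
move=> de; rewrite /f_dual; case: pselect => [H|[]]; last exact: Hf.1 e' de.
by case: (cid H).
Qed.

(* [fpolar n] is {f_e' : e' in B_n}, bounded by [Hf]; its closure is the compact K_n. *)
Definition fpolar n (g : FT) := exists e', polarB p n e' /\ represents e' g.

Definition fpolar_hull n := closureFV domK TK (fpolar n).

Lemma fpolar_FVK n g : fpolar n g -> FVK g. Proof. by case=> e' [_ []]. Qed.

Lemma f_dual_fpolar_hull n e' : polarB p n e' -> fpolar_hull n (f_dual e').
Proof.
move=> pe; apply: (closure_sub HW HlinK (@fpolar_FVK n)).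
by exists e'; split=> //; apply: f_dualP; case: pe.
Qed.

Lemma fpolar_hull_compact n : compactFV domK TK (fpolar_hull n).
Proof. exact: HMontel (Hf.2 n). Qed.

Lemma fpolar_hull_abs_convex n : abs_convex (fpolar_hull n).
Proof.
apply: (closure_abs_convex HW HlinK (@fpolar_FVK n)).
move=> g1 g2 a c [e1 [p1 [F1 h1]]] [e2 [p2 [F2 h2]]] hac.
exists (fun x => a * e1 x + c * e2 x); split; first exact: polar_comb.
split=> [|m y Um]; first exact: (FVK_comb HW HlinK).
have [[d1 _ _] [d2 _ _]] := (F1, F2); have om := U_omega HU Um.
by rewrite /fadd /fscale (TK_comb HlinK) // h1 // h2.
Qed.

Lemma fpolar_hull0 n : fpolar_hull n 0.
Proof.
apply: (closure_sub HW HlinK (@fpolar_FVK n)); exists (fun _ => 0); split; first exact: polar0.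
by split=> [|m y Um]; [exact: (FVK0 HW HlinK) | exact/(TK0 HlinK)/(U_omega HU Um)].
Qed.

Definition fcomb (cs : seq K) (pts : seq (Mset W * X W)) : E :=
  \sum_(ct <- zip cs pts) ct.1 *: f ct.2.1 ct.2.2.

Lemma dualE_fcomb e' cs pts : dualE p e' -> (forall t, List.In t pts -> U t.1 t.2) ->
  e' (fcomb cs pts) = lincomb cs pts (point_eval TK) (f_dual e').
Proof.
move=> de; elim: pts cs => [|t pts IH] [|c cs] hU;
  try by rewrite /fcomb /lincomb /= !big_nil (dualE0 de).
rewrite /fcomb /lincomb /= !big_cons (dualE_lin _ _ _ de); congr (_ * _ + _).
  by rewrite /point_eval (f_dualP de).2 //; apply: hU; left.
by apply: IH => t' it'; apply: hU; right.
Qed.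

Section Representation.
Variables (y : FT -> K) (ap : nat -> seq K * seq (Mset W * X W)).
Hypotheses (dy : dualFV y) (apU : forall k t, List.In t (ap k).2 -> U t.1 t.2)
  (apP : forall k g, fpolar_hull k g ->
     `|y g - lincomb (ap k).1 (ap k).2 (point_eval TK) g| <= inv_succ k).

Let z k := fcomb (ap k).1 (ap k).2.

(* Test [z i - z k] against a norming functional in [B_n]: its [f_dual] lies in
   [fpolar_hull i] and [fpolar_hull k], where both combinations approximate [y]. *)
Lemma approx_cauchy n eta : 0 < eta -> exists N, forall i k, (N <= i)%N -> (N <= k)%N ->
  p n (z i - z k) < eta.
Proof.
move=> e0; have [N0 hN0] := inv_succ_small (divr_gt0 e0 (ltr0Sn _ 1)).
exists (maxn n N0) => i k; rewrite !geq_max => /andP [ni N0i] /andP [nk N0k].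
have [e' [pe ee]] := norming_functional HE n (z i - z k).
have gi := f_dual_fpolar_hull (polar_mono HE ni pe).
have gk := f_dual_fpolar_hull (polar_mono HE nk pe).
have de := pe.1; have pos : 0 <= e' (z i - z k) by rewrite ee (p_ge0 HE).
rewrite -ee -(ger0_norm pos) (dualEB _ _ de) (dualE_fcomb _ de (@apU i)).
rewrite (dualE_fcomb _ de (@apU k)).
set g := f_dual e'; set li := lincomb _ _ _ g; set lk := lincomb _ _ _ g.
have -> : li - lk = - (y g - li) + (y g - lk) by rewrite opprB addrA subrK.
apply: le_lt_trans (ler_normD _ _) _; rewrite normrN [ltRHS]splitr.
by apply: ltrD; apply: le_lt_trans (hN0 _ _); [exact: apP | |exact: apP|].
Qed.

(* Pair [e' (z k)] with [y] through the rescaled functional [C^-1 e'] in [B_k], k >= n0. *)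
Lemma approx_limit zl :
  (forall n eps, 0 < eps -> exists N, forall i, (N <= i)%N -> p n (z i - zl) < eps) ->
  forall e', dualE p e' -> e' zl = y (f_dual e').
Proof.
move=> hzl e' de; have [n0 [C [C0 hC hpol]]] := dualE_polar HE de.
have [Fg hg] := f_dualP de; set g := f_dual e' in Fg hg *.
have Cg k : (n0 <= k)%N -> fpolar_hull k (C^-1 *: g).
  move=> hk; apply: (closure_sub HW HlinK (@fpolar_FVK k)).
  exists (fun x => C^-1 * e' x); split; first exact: hpol.
  split=> [|m x Um]; first exact: (FVKZ HW HlinK).
  have [dg _ _] := Fg; have om := U_omega HU Um.
  by rewrite (TKZ HlinK) // hg.
apply/eqP; rewrite -subr_eq0; apply/eqP/normr0_eq0/eqP.
rewrite eq_le normr_ge0 andbT; apply/ler_gtP => eta e0.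
have e2 : 0 < eta / 2 / C by rewrite !divr_gt0.
have [N1 hN1] := hzl n0 _ e2; have [N2 hN2] := inv_succ_small e2.
pose k := maxn n0 (maxn N1 N2).
have [k0 k1 k2] : [/\ (n0 <= k)%N, (N1 <= k)%N & (N2 <= k)%N].
  by rewrite !leq_max !leqnn !orbT.
have lin := @lincomb_linear _ _ FVK _ (ap k).1 (ap k).2 (point_eval TK)
  (fun t it => point_eval_linear HlinK HU (apU it)).
have -> : e' zl - y g = - e' (z k - zl) +
    C * (lincomb (ap k).1 (ap k).2 (point_eval TK) (C^-1 *: g) - y (C^-1 *: g)).
  rewrite (dualEB _ _ de) /z (dualE_fcomb _ de (@apU k)) -/g.
  rewrite (linear_onZ (FVK_subspace HW HlinK) lin) // (dualZ HW HlinK) //.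
  by rewrite -mulrBr mulrA divff ?gt_eqF // mul1r opprB addrA subrK.
apply: ltW; apply: le_lt_trans (ler_normD _ _) _.
rewrite normrN normrM (gtr0_norm C0) [ltRHS]splitr; apply: ltrD.
  by apply: le_lt_trans (hC _) _; rewrite -ltr_pdivlMl // mulrC; apply: hN1.
rewrite -ltr_pdivlMl // mulrC distrC; apply: le_lt_trans (apP (Cg _ k0)) _.
exact: hN2.
Qed.

End Representation.

Lemma representation_exists y : dualFV y ->
  exists z : E, forall e', dualE p e' -> e' z = y (f_dual e').
Proof.
move=> dy.
have /choice [ap apP] : forall k, exists cp : seq K * seq (Mset W * X W),
    (forall t, List.In t cp.2 -> U t.1 t.2) /\ forall g, fpolar_hull k g ->
      `|y g - lincomb cp.1 cp.2 (point_eval TK) g| <= inv_succ k.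
  move=> k; have [cs [pts hk]] := dual_approx_on_compact HW HlinK HU
    (fpolar_hull_compact k) (@fpolar_hull_abs_convex k) (fpolar_hull0 k) dy (inv_succ_gt0 k).
  by exists (cs, pts).
have apU k t : List.In t (ap k).2 -> U t.1 t.2 by apply: (apP k).1.
have apP' k g := (apP k).2 g.
case: HE => _ _ _ _ [_ complete].
have [zl hzl] := complete _ (approx_cauchy apU apP').
by exists zl; apply: (approx_limit dy apU apP').
Qed.

Definition u_f (y : FT -> K) : E :=
  if pselect (dualFV y) is left H then projT1 (cid (representation_exists H)) else 0.

Lemma u_fP y : dualFV y -> forall e', dualE p e' -> e' (u_f y) = y (f_dual e').
Proof. by move=> dy; rewrite /u_f; case: pselect => [H|//]; case: (cid _). Qed.

Lemma u_f_lin (a : K) y1 y2 : dualFV y1 -> dualFV y2 ->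
  u_f (fun g => a * y1 g + y2 g) = a *: u_f y1 + u_f y2.
Proof.
move=> d1 d2; apply: (dualE_eq HE) => e' de.
by rewrite (u_fP (dual_comb HW a d1 d2)) // (dualE_lin _ _ _ de) !u_fP.
Qed.

(* The seminorm [p_n (u y)] is attained by some [e'] in [B_n], and [f_dual e'] lies in
   the absolutely convex compact set [fpolar_hull n]. *)
Lemma epsFV_u_f : epsFV domK TK p u_f.
Proof.
split=> [a y1 y2 d1 d2|n]; first exact: u_f_lin.
exists [:: fpolar_hull n], 1; split=> [Kc [<-|//]|y dy b0 hb].
  by split; [exact: fpolar_hull_abs_convex | exact: fpolar_hull_compact].
have [e' [pe ee]] := norming_functional HE n (u_f y).
have hy : y (f_dual e') = p n (u_f y) by rewrite -(u_fP dy pe.1).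
have pos : 0 <= y (f_dual e') by rewrite hy (p_ge0 HE).
rewrite mul1r -hy -(ger0_norm pos); apply: hb (or_introl erefl) _ _.
exact: f_dual_fpolar_hull.
Qed.

Lemma restriction_surjective : exists u, epsFV domK TK p u /\
  forall m y, U m y -> TE m (Sop u) y = f m y.
Proof.
exists u_f; split=> [|m y Um]; first exact: epsFV_u_f.
have [_ _ ->] := Hcons epsFV_u_f (U_omega HU Um).
apply: (dualE_eq HE) => e' de.
by rewrite (u_fP (U_dual HU Um) de) /TKx (f_dualP de).2.
Qed.

End Restriction.

Theorem corollary5p3
  (R : realType) (b : bool) (W : wdata (RC R b))
  (E : lmodType (RC R b)) (p : nat -> E -> RC R b)
  (domK : Mset W -> (Omega W -> (RC R b)^o) -> Prop)
  (TK : Mset W -> (Omega W -> (RC R b)^o) -> X W -> (RC R b)^o)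
  (domE : Mset W -> (Omega W -> E) -> Prop)
  (TE : Mset W -> (Omega W -> E) -> X W -> E)
  (U : Mset W -> X W -> Prop)
  (HW : wdata_ok W)
  (HE : frechet p)
  (HlinK : lin_ops domK TK)
  (HlinE : lin_ops domE TE)
  (Hdom : dom_spaces domK TK p domE TE)
  (Hstrong : strong domK TK p domE TE)
  (Hcons : consistent domK TK p domE TE)
  (HMontel : semi_Montel domK TK)
  (HU : set_of_uniqueness domK TK U) :
  forall f : Mset W -> X W -> E, FVE'U_sb domK TK p U f ->
    exists u, epsFV domK TK p u /\
      forall m y, U m y -> TE m (Sop u) y = f m y.
Proof.
move=> f Hf; exact: restriction_surjective HW HE HlinK Hcons HMontel HU Hf.
Qed.
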